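(* Fix $z\in M$ and $E\in H(M)$ such that the $\mathbb R$-orbit of $z$ meets $H^{-1}(E)$ at $z_E$, and let $\tau(z,E)\in\mathbb R$ with $e^{\tau(z,E)}\cdot z_E=z$. Then \[ b(z,E)=\varphi(z)+u(2E;z),\qquad \partial_E b(z,E)=-2\tau(z,E),\qquad \partial_E^2 b(z,E)=\frac{4}{\partial_\rho^2\varphi(z_E)}. \] Hence $E\mapsto b(z,E)$ is strictly convex with minimum value $0$ attained at $E=H(z)$.
   Context: $M$ is a compact Kähler manifold with positive Hermitian holomorphic line bundle $(L,h)$; a holomorphic Hamiltonian $S^1$-action generated by $H:M\to\mathbb R$ (lifting to $L$, preserving $h$) extends to a holomorphic $\mathbb C^*$-action $z\mapsto e^{\rho+i\theta}\cdot z$, the $\mathbb R$-part $e^\rho\cdot z$ moving along the gradient of $H$. $\partial_\rho f(z)=\frac{d}{d\rho}|_{\rho=0}f(e^\rho\cdot z)$. $\varphi$ is the $S^1$-invariant local Kähler potential $\|e_L\|_h^2=e^{-\varphi}$ of a local $\mathbb C^*$-invariant holomorphic frame, so that $H=\frac12\partial_\rho\varphi$ and $\rho\mapsto\varphi(e^\rho\cdot z)$ is smooth and strictly convex. The leafwise symplectic potential is the Legendre transform $u(I;z)=\sup_{\rho\in\mathbb R}\bigl(I\rho-\varphi(e^\rho\cdot z)\bigr)$. $b(z,E)=2\int_0^{\tau(z,E)}\bigl(H(e^\sigma\cdot z_E)-E\bigr)d\sigma$. *)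

(* Abstraction: only the real part of the C^*-action (the gradient flow
   rho |-> e^rho . z) and the S^1-invariant local potential phi enter the
   lemma. *)
From Stdlib Require Import Reals.
From Coquelicot Require Import Coquelicot.
Open Scope R_scope.

Definition Hf {M : Type} (act : R -> M -> M) (phi : M -> R) (x : M) : R :=
  / 2 * Derive (fun r => phi (act r x)) 0.

Definition d2rho {M : Type} (act : R -> M -> M) (phi : M -> R) (x : M) : R :=
  Derive_n (fun r => phi (act r x)) 2 0.

Definition level_reached {M : Type} (act : R -> M -> M) (phi : M -> R)
  (z : M) (E : R) : Prop :=
  exists t : R, Hf act phi (act t z) = E.

Definition uleg {M : Type} (act : R -> M -> M) (phi : M -> R)
  (I : R) (x : M) : Rbar :=
  Lub_Rbar (fun y => exists rho : R, y = I * rho - phi (act rho x)).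

Definition bfun {M : Type} (act : R -> M -> M) (phi : M -> R)
  (z : M) (tau : R -> R) (E : R) : R :=
  2 * RInt (fun s => Hf act phi (act s (act (- tau E) z)) - E) 0 (tau E).

(* Along the R-orbit of z put f r := phi (e^r . z): f is smooth and strictly
   convex, and H (e^r . z) = f'(r) / 2, so r_E := - tau E is the critical point
   of r |-> 2 E r - f r.  The integrand of b is the derivative of
   s |-> f (s - tau E) / 2 - E s, hence b E = f 0 + (2 E r_E - f r_E), and the
   supremum defining u (2 E) is attained at r_E.  Moreover E |-> r_E is the
   local inverse of the increasing function f' / 2, so r_E' = 2 / f''(r_E);
   the envelope formula then gives b' = 2 r_E and b'' = 4 / f''(r_E).
   Strict convexity, nonnegativity and b (H z) = 0 all come from the strict
   tangent-line inequality for f. *)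

From Stdlib Require Import Reals Lra Ranalysis5 ssreflect.
From Coquelicot Require Import Coquelicot.
Open Scope R_scope.

Section PositiveDerivative.

Variables g g' : R -> R.
Hypothesis g_derive : forall x, is_derive g x (g' x).
Hypothesis g'_pos : forall x, 0 < g' x.

Lemma pos_derive_increasing x y : x < y -> g x < g y.
Proof.
move=> xy.
have [c [mvt _]] := MVT_cor2 g g' x y xy
  (fun c _ => proj1 (is_derive_Reals _ _ _) (g_derive c)).
have := g'_pos c; nra.
Qed.

Lemma pos_derive_continuous x : continuity_pt g x.
Proof.
apply/continuity_pt_filterlim/ex_derive_continuous.
by exists (g' x).
Qed.

Lemma pos_derive_range_open r :
  exists d, 0 < d /\ forall y, Rabs (y - g r) < d -> exists x, g x = y.
Proof.
have lo := pos_derive_increasing (r - 1) r ltac:(lra).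
have hi := pos_derive_increasing r (r + 1) ltac:(lra).
exists (Rmin (g (r + 1) - g r) (g r - g (r - 1))); split.
  by apply: Rmin_case; lra.
move=> y /Rabs_def2 hy.
have m1 := Rmin_l (g (r + 1) - g r) (g r - g (r - 1)).
have m2 := Rmin_r (g (r + 1) - g r) (g r - g (r - 1)).
have y_between : Rmin (g (r - 1)) (g (r + 1)) <= y <= Rmax (g (r - 1)) (g (r + 1)).
  by rewrite Rmin_left ?Rmax_right; lra.
have [x [_ gx]] := IVT_gen g (r - 1) (r + 1) y pos_derive_continuous y_between.
by exists x.
Qed.

Variables (h : R -> R) (y d : R).
Hypothesis d_pos : 0 < d.
Hypothesis h_inverse : forall y', Rabs (y' - y) < d -> g (h y') = y'.

Lemma local_inverse_lt y1 y2 :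
  Rabs (y1 - y) < d -> Rabs (y2 - y) < d -> y1 < y2 -> h y1 < h y2.
Proof.
move=> h1 h2 lt12.
case: (Rlt_or_le (h y1) (h y2)) => // le21.
have : g (h y2) <= g (h y1).
  by case: le21 => [/pos_derive_increasing|->]; lra.
rewrite !h_inverse //; lra.
Qed.

Lemma local_inverse_le y1 y2 :
  Rabs (y1 - y) < d -> Rabs (y2 - y) < d -> y1 <= y2 -> h y1 <= h y2.
Proof.
move=> h1 h2 [lt12|->]; [left; exact: local_inverse_lt|lra].
Qed.

Let y_lo := y - d / 2.
Let y_hi := y + d / 2.

Let near_y y' : y_lo <= y' <= y_hi -> Rabs (y' - y) < d.
Proof. by move=> hy'; apply: Rabs_def1; rewrite /y_lo /y_hi in hy'; lra. Qed.

Let h_lo_hi : h y_lo < h y < h y_hi.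
Proof.
by split; apply: local_inverse_lt; try apply: near_y; rewrite /y_lo /y_hi; lra.
Qed.

Lemma local_inverse_continuous : continuity_pt h y.
Proof.
have g_lo : g (h y_lo) = y_lo by apply/h_inverse/near_y; rewrite /y_lo /y_hi; lra.
have g_hi : g (h y_hi) = y_hi by apply/h_inverse/near_y; rewrite /y_lo /y_hi; lra.
apply: (continuity_pt_recip_interv g h (h y_lo) (h y_hi)) => [||y'|y'||].
- by case: h_lo_hi; lra.
- by move=> *; apply: pos_derive_increasing.
- by rewrite g_lo g_hi => *; apply/h_inverse/near_y.
- rewrite g_lo g_hi => lo hi.
  by split; apply: local_inverse_le; try apply: near_y; rewrite /y_lo /y_hi in lo hi *; lra.
- by move=> *; apply: pos_derive_continuous.
- by rewrite g_lo g_hi /y_lo /y_hi; lra.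
Qed.

Lemma local_inverse_derive : is_derive h y (/ g' (h y)).
Proof.
apply/is_derive_Reals.
pose g_derivable a : derivable_pt g a :=
  exist _ (g' a) (proj1 (is_derive_Reals _ _ _) (g_derive a)).
have := derivable_pt_lim_recip_interv g h y_lo y_hi y (fun a _ => g_derivable a)
  local_inverse_continuous ltac:(rewrite /y_lo /y_hi; lra)
  ltac:(rewrite /y_lo /y_hi; lra) ltac:(case: h_lo_hi; lra).
rewrite /= /Rdiv Rmult_1_l; apply.
- by move=> y' hy'; apply/h_inverse/near_y.
- exact: Rgt_not_eq (g'_pos _).
Qed.

End PositiveDerivative.

Section StrictlyConvex.

Variables f f' : R -> R.
Hypothesis f_derive : forall x, is_derive f x (f' x).
Hypothesis f'_increasing : forall x y, x < y -> f' x < f' y.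

Lemma tangent_lt x y : x <> y -> f x + f' x * (y - x) < f y.
Proof.
have mvt a b : a < b -> exists c, f b - f a = f' c * (b - a) /\ a < c < b.
  by move=> ab; apply: MVT_cor2 => // c _; apply/is_derive_Reals.
move=> xy; case: (Rlt_or_le x y) => [lt|le].
- have [c [fc [xc _]]] := mvt x y lt.
  have := f'_increasing x c xc; nra.
- have [c [fc [_ cx]]] := mvt y x ltac:(lra).
  have := f'_increasing c x cx; nra.
Qed.

Lemma tangent_le x y : f x + f' x * (y - x) <= f y.
Proof. by case: (Req_dec x y) => [->|xy]; [lra|left; apply: tangent_lt]. Qed.

Lemma legendre_lub r0 :
  is_lub_Rbar (fun v => exists r, v = f' r0 * r - f r) (f' r0 * r0 - f r0).
Proof.
split=> [_ [r ->] /=|b ub]; last by apply: ub; exists r0.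
by have := tangent_le r0 r; lra.
Qed.

Lemma legendre_strict_convex r1 r2 r t :
  f' r1 <> f' r2 -> 0 < t < 1 ->
  (t * f' r1 + (1 - t) * f' r2) * r - f r
    < t * (f' r1 * r1 - f r1) + (1 - t) * (f' r2 * r2 - f r2).
Proof.
move=> f'12 t01.
have le1 := tangent_le r1 r; have le2 := tangent_le r2 r.
have [ne1|ne2] : r <> r1 \/ r <> r2.
  by case: (Req_dec r r1) => [->|]; [right => e; apply: f'12; rewrite e|left].
- have := tangent_lt r1 r (not_eq_sym ne1); nra.
- have := tangent_lt r2 r (not_eq_sym ne2); nra.
Qed.

End StrictlyConvex.

Section OrbitPotential.

Context {M : Type} {act : R -> M -> M} {phi : M -> R} {z : M} {tau : R -> R}.
Hypothesis act0 : forall x, act 0 x = x.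
Hypothesis actA : forall s t x, act s (act t x) = act (s + t) x.

Let f r := phi (act r z).
Hypothesis f_smooth : forall n r, ex_derive_n f n r.
Hypothesis f_convex : forall r, 0 < Derive_n f 2 r.
Hypothesis tau_level : forall E, level_reached act phi z E ->
  Hf act phi (act (- tau E) z) = E.

Let H_orbit r := Derive f r / 2.

Let f_derive r : is_derive f r (Derive f r).
Proof. exact: Derive_correct (f_smooth 1 r). Qed.

Let f'_derive r : is_derive (Derive f) r (Derive_n f 2 r).
Proof. exact: Derive_correct (f_smooth 2 r). Qed.

Let f'_increasing : forall x y, x < y -> Derive f x < Derive f y.
Proof. exact: pos_derive_increasing f'_derive f_convex. Qed.

Let H_orbit_derive r : is_derive H_orbit r (Derive_n f 2 r / 2).
Proof.
rewrite /Rdiv Rmult_comm.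
by apply: is_derive_ext (is_derive_scal _ _ _ _ (f'_derive r)) => s; rewrite /H_orbit Rmult_comm.
Qed.

Let H_orbit_convex r : 0 < Derive_n f 2 r / 2.
Proof. by have := f_convex r; lra. Qed.

Lemma Derive_n_orbit_shift t n x :
  Derive_n (fun r => phi (act r (act t z))) n x = Derive_n f n (x + t).
Proof. by rewrite -Derive_n_comp_trans; apply: Derive_n_ext => r; rewrite actA. Qed.

Lemma Hf_orbit t : Hf act phi (act t z) = H_orbit t.
Proof.
by rewrite /Hf /H_orbit [Derive _ 0](Derive_n_orbit_shift t 1) Rplus_0_l Rmult_comm.
Qed.

Lemma H_orbit_at_level E : level_reached act phi z E -> H_orbit (- tau E) = E.
Proof. by move=> lev; rewrite -Hf_orbit tau_level. Qed.

Let Derive_at_level E : level_reached act phi z E -> Derive f (- tau E) = 2 * E.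
Proof. by move=> /H_orbit_at_level; rewrite /H_orbit; lra. Qed.

Let H_orbit_injective x y : H_orbit x = H_orbit y -> x = y.
Proof.
have incr := pos_derive_increasing _ _ H_orbit_derive H_orbit_convex.
by case: (Rtotal_order x y) => [/incr|[//|/incr]]; lra.
Qed.

Lemma level_reached_locally E : level_reached act phi z E ->
  exists d, 0 < d /\ forall E', Rabs (E' - E) < d -> level_reached act phi z E'.
Proof.
move=> /H_orbit_at_level lev.
have [d [d_pos range]] := pos_derive_range_open _ _ H_orbit_derive H_orbit_convex (- tau E).
rewrite lev in range; exists d; split=> // E' /range [t Ht].
by exists t; rewrite Hf_orbit.
Qed.

Lemma tau_derive E : level_reached act phi z E ->
  is_derive tau E (- (2 / Derive_n f 2 (- tau E))).
Proof.
move=> lev; have [d [d_pos near]] := level_reached_locally _ lev.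
have := local_inverse_derive _ _ H_orbit_derive H_orbit_convex (fun E => - tau E) E d
  d_pos (fun E' hE' => H_orbit_at_level _ (near E' hE')).
have -> : - (2 / Derive_n f 2 (- tau E)) = opp (/ (Derive_n f 2 (- tau E) / 2)).
  by have := f_convex (- tau E); rewrite /opp /= => pos; field; lra.
move=> der; apply: is_derive_ext (is_derive_opp _ _ _ der) => s.
exact: Ropp_involutive.
Qed.

Lemma bfun_closed_form E :
  bfun act phi z tau E = f 0 + (2 * E * - tau E - f (- tau E)).
Proof.
set T := tau E.
pose F s := f (s + - T) / 2 - E * s.
have F_primitive : is_RInt (fun s => H_orbit (s + - T) - E) 0 T (minus (F T) (F 0)).
  apply: is_RInt_derive => x _.
  - rewrite /F; auto_derive; first exact (f_smooth 1 _).
    by rewrite Rmult_1_l Rmult_1_r.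
  - apply: ex_derive_continuous; auto_derive.
    by eexists; exact: H_orbit_derive.
rewrite /bfun (RInt_ext _ (fun s => H_orbit (s + - T) - E)) => [|s _].
  rewrite (is_RInt_unique _ _ _ _ F_primitive) /minus /plus /opp /F /=.
  by rewrite Rplus_opp_r Rplus_0_l; field.
by rewrite actA Hf_orbit.
Qed.

Lemma bfun_legendre E : level_reached act phi z E ->
  Finite (bfun act phi z tau E) = Rbar_plus (phi z) (uleg act phi (2 * E) z).
Proof.
move=> lev; rewrite bfun_closed_form /uleg -(Derive_at_level _ lev).
rewrite (is_lub_Rbar_unique _ _ (legendre_lub _ _ f_derive f'_increasing (- tau E))).
by rewrite /= /f act0.
Qed.

Lemma bfun_derive E : level_reached act phi z E ->
  is_derive (bfun act phi z tau) E (-2 * tau E).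
Proof.
move=> lev; have tau' : ex_derive tau E by eexists; exact: tau_derive.
apply: (is_derive_ext (fun E => f 0 + (2 * E * - tau E - f (- tau E)))) => [E'|].
  by rewrite bfun_closed_form.
auto_derive; first by repeat split => //; exact (f_smooth 1 _).
have -> : Derive (fun x => f x) (- tau E) = 2 * E by exact: Derive_at_level.
ring.
Qed.

Lemma bfun_derive2 E : level_reached act phi z E ->
  is_derive_n (bfun act phi z tau) 2 E (4 / d2rho act phi (act (- tau E) z)).
Proof.
move=> lev; have [d [d_pos near]] := level_reached_locally _ lev.
apply: (is_derive_ext_loc (fun E => -2 * tau E)).
  exists (mkposreal d d_pos) => E' hE'.
  by symmetry; apply: is_derive_unique; apply: bfun_derive; apply: near.
rewrite /d2rho Derive_n_orbit_shift Rplus_0_l.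
have -> : 4 / Derive_n f 2 (- tau E) = -2 * - (2 / Derive_n f 2 (- tau E)).
  by have pos := f_convex (- tau E); field; lra.
exact: is_derive_scal (tau_derive _ lev).
Qed.

Lemma bfun_strict_convex E1 E2 t :
  level_reached act phi z E1 -> level_reached act phi z E2 -> E1 <> E2 -> 0 < t < 1 ->
  bfun act phi z tau (t * E1 + (1 - t) * E2)
    < t * bfun act phi z tau E1 + (1 - t) * bfun act phi z tau E2.
Proof.
move=> lev1 lev2 E12 t01; rewrite !bfun_closed_form.
have := legendre_strict_convex _ _ f_derive f'_increasing (- tau E1) (- tau E2)
  (- tau (t * E1 + (1 - t) * E2)) t.
rewrite !Derive_at_level // => /(_ ltac:(lra) t01); lra.
Qed.

Lemma tau_at_H : tau (Hf act phi z) = 0.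
Proof.
have lev : level_reached act phi z (Hf act phi z) by exists 0; rewrite act0.
have := H_orbit_at_level _ lev; rewrite -{2}(act0 z) Hf_orbit => /H_orbit_injective.
lra.
Qed.

Lemma bfun_at_H : bfun act phi z tau (Hf act phi z) = 0.
Proof. by rewrite bfun_closed_form tau_at_H Ropp_0; ring. Qed.

Lemma bfun_nonneg E : level_reached act phi z E -> 0 <= bfun act phi z tau E.
Proof.
move=> lev; rewrite bfun_closed_form.
by have := tangent_le _ _ f_derive f'_increasing (- tau E) 0; rewrite Derive_at_level //; lra.
Qed.

End OrbitPotential.

Theorem lemma2p5 (M : Type) (act : R -> M -> M) (phi : M -> R)
  (act0 : forall x, act 0 x = x)
  (actA : forall s t x, act s (act t x) = act (s + t) x)
  (phi_smooth : forall x n r, ex_derive_n (fun r => phi (act r x)) n r)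
  (phi_conv : forall x r, 0 < Derive_n (fun r => phi (act r x)) 2 r)
  (z : M) (tau : R -> R)
  (htau : forall E, level_reached act phi z E ->
            Hf act phi (act (- tau E) z) = E) :
  (forall E, level_reached act phi z E ->
     Finite (bfun act phi z tau E) = Rbar_plus (phi z) (uleg act phi (2 * E) z) /\
     is_derive (bfun act phi z tau) E (-2 * tau E) /\
     is_derive_n (bfun act phi z tau) 2 E
       (4 / d2rho act phi (act (- tau E) z))) /\
  (forall E1 E2 t, level_reached act phi z E1 -> level_reached act phi z E2 ->
     E1 <> E2 -> 0 < t < 1 ->
     bfun act phi z tau (t * E1 + (1 - t) * E2)
       < t * bfun act phi z tau E1 + (1 - t) * bfun act phi z tau E2) /\
  bfun act phi z tau (Hf act phi z) = 0 /\
  (forall E, level_reached act phi z E -> 0 <= bfun act phi z tau E).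
Proof.
have smooth := phi_smooth z; have convex := phi_conv z.
split; [|split; [|split]].
- move=> E lev; split; [|split].
  + exact: bfun_legendre act0 actA smooth convex htau E lev.
  + exact: bfun_derive actA smooth convex htau E lev.
  + exact: bfun_derive2 actA smooth convex htau E lev.
- exact: bfun_strict_convex actA smooth convex htau.
- exact: bfun_at_H act0 actA smooth convex htau.
- exact: bfun_nonneg actA smooth convex htau.
Qed.
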